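(* Let $k,n\in\mathbb{N}$ and let $Z_{n,k}$ be the Cayley graph of $\mathbb{Z}/n\mathbb{Z}$ with respect to $\{-k,\ldots,k\}$. If $A\subset Z_{n,k}$ satisfies $k\le|A|\le n-k$, then $|\partial^EA|\ge\frac14k^2-1$.
   Context: In the Cayley graph $\mathcal{C}(G,S)$ of a group $G$ with symmetric generating set $S$, vertices are elements of $G$ and $x,y$ are adjacent iff $y=xs$ for some $s\in S\setminus\{1\}$. $\partial^EA$ is the set of edges with exactly one endpoint in $A$. *)

From HB Require Import structures.
From mathcomp Require Import all_boot all_order all_algebra.
Set Implicit Arguments. Unset Strict Implicit. Unset Printing Implicit Defensive.

(* Adjacency in the Cayley graph Z_{n,k} = C(Z/nZ, {-k,...,k}):
   x ~ y iff y = x + s (mod n) for some s in {-k..k} with s <> 0 in Z/nZ,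
   i.e. x <> y and y = x + s or x = y + s (mod n) for some 1 <= s <= k. *)
Definition cayley_adj (n k : nat) (x y : 'I_n) : bool :=
  (x != y) &&
  [exists s : 'I_k.+1,
     (0 < s) && ((y %% n == (x + s) %% n) || (x %% n == (y + s) %% n))].

(* Edge boundary: edges with exactly one endpoint in A.  Since the graph is
   simple and undirected, such an edge {x,y} corresponds bijectively to the
   ordered pair (x,y) with x in A, y not in A. *)
Definition edge_boundary (n k : nat) (A : {set 'I_n}) : {set 'I_n * 'I_n} :=
  [set p | [&& p.1 \in A, p.2 \notin A & cayley_adj k p.1 p.2]].

From HB Require Import structures.
From mathcomp Require Import all_boot all_order all_algebra.
From mathcomp Require Import zify lra.
Import Order.TTheory GRing.Theory Num.Theory.

Set Implicit Arguments.
Unset Strict Implicit.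
Unset Printing Implicit Defensive.

(* Every window W_j = {j, j+1, ..., j+k} of k+1 consecutive residues is a
   clique, so |W_j ∩ A| * |W_j \ A| <= |∂A|.  Moving the window by one step
   changes |W_j ∩ A| by at most one, so either some window meets A in
   exactly t = (k+1)/2 points, which gives |∂A| >= t (k+1-t), or all windows
   lie strictly on one side of t.  In the latter case every vertex of A (or
   of its complement, which also has at least k elements) sees more than
   t of its k+1 window neighbours on the other side, so |∂A| >= k (t+1). *)

Lemma cayley_adjC n k (x y : 'I_n) : cayley_adj k x y = cayley_adj k y x.
Proof.
by rewrite /cayley_adj eq_sym; congr andb; apply: eq_existsb => s; rewrite orbC.
Qed.

Lemma card_edge_boundaryC n k (A : {set 'I_n}) :
  #|edge_boundary k (~: A)| = #|edge_boundary k A|.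
Proof.
pose swap (p : 'I_n * 'I_n) := (p.2, p.1).
have swapK : involutive swap by case.
rewrite -(card_preimset _ (inv_inj swapK)); apply: eq_card => -[x y].
by rewrite !inE /= negbK cayley_adjC andbCA.
Qed.

Lemma card_set_dep_pair (T U : finType) (D : {set T}) (F : T -> {set U}) :
  #|[set p : T * U | (p.1 \in D) && (p.2 \in F p.1)]| = \sum_(x in D) #|F x|.
Proof.
rewrite -sum1_card; under [RHS]eq_bigr do rewrite -sum1_card.
by rewrite pair_big_dep; apply: eq_bigl => p; rewrite inE.
Qed.

Lemma leq_card_setI_subU1 (T : finType) (x : T) (A B C : {set T}) :
  B \subset x |: C -> #|B :&: A| <= #|C :&: A|.+1.
Proof.
move=> sBC; apply: leq_trans (_ : #|x |: (C :&: A)| <= _).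
  by rewrite subset_leq_card // setUIr setISS // subsetUr.
by rewrite cardsU1; case: (_ \notin _).
Qed.

Lemma nat_ivt (f : nat -> nat) t j :
  (forall m, f m.+1 <= (f m).+1 /\ f m <= (f m.+1).+1) ->
  (f 0 <= t <= f j) || (f j <= t <= f 0) -> exists m, f m = t.
Proof.
move=> f_step; elim: j => [|j IHj] ft; first by exists 0; lia.
case: (boolP ((f 0 <= t <= f j) || (f j <= t <= f 0))) => [|not_ftj];
  first exact: IHj.
by have := f_step j; exists j.+1; lia.
Qed.

Lemma nat_ivt_trichotomy (f : nat -> nat) t N :
  (forall m, f m.+1 <= (f m).+1 /\ f m <= (f m.+1).+1) ->
  [\/ exists m, f m = t, forall m, m < N -> t < f m
    | forall m, m < N -> f m < t].
Proof.
move=> f_step.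
case: (boolP [forall m : 'I_N, t < f m]) => [/forallP above | ].
  by apply: Or32 => m ltmN; apply: (above (Ordinal ltmN)).
case: (boolP [forall m : 'I_N, f m < t]) => [/forallP below _ | ].
  by apply: Or33 => m ltmN; apply: (below (Ordinal ltmN)).
rewrite !negb_forall => /existsP[hi] /negbTE hi_not_below.
move=> /existsP[lo] /negbTE lo_not_above.
apply: Or31; case: (ltngtP (f 0) t) => [f0t | tf0 | f0t]; last by exists 0.
- by apply: (nat_ivt (j := hi)) => //; lia.
- by apply: (nat_ivt (j := lo)) => //; lia.
Qed.

Section Windows.

Variables n k : nat.

Definition window (j : nat) : {set 'I_n} :=
  [set x : 'I_n | [exists d : 'I_k.+1, val x == (j + d) %% n]].

Lemma window_self (x : 'I_n) : x \in window x.
Proof.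
by rewrite inE; apply/existsP; exists ord0; rewrite addn0 modn_small.
Qed.

Lemma window_clique j (x y : 'I_n) :
  x \in window j -> y \in window j -> x != y -> cayley_adj k x y.
Proof.
rewrite !inE => /existsP[dx /eqP xE] /existsP[dy /eqP yE] neq_xy.
have neq_d : val dx != val dy.
  by apply: contra neq_xy => /eqP eq_d; rewrite -val_eqE xE yE eq_d.
rewrite /cayley_adj neq_xy xE yE modn_mod; apply/existsP.
have [ltxy | leyx] := ltnP dx dy.
- have lt_s : dy - dx < k.+1 by have := ltn_ord dy; lia.
  exists (Ordinal lt_s) => /=.
  by rewrite subn_gt0 ltxy modnDml -addnA (subnKC (ltnW ltxy)) eqxx.
- have lt_s : dx - dy < k.+1 by have := ltn_ord dx; lia.
  exists (Ordinal lt_s) => /=.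
  rewrite subn_gt0 ltn_neqAle eq_sym neq_d leyx !modnDml -!addnA (subnKC leyx).
  by rewrite modn_mod eqxx orbT.
Qed.

Lemma card_window j : k < n -> #|window j| = k.+1.
Proof.
move=> ltkn; have n_gt0 : 0 < n by lia.
pose f (d : 'I_k.+1) : 'I_n := Ordinal (ltn_pmod (j + d) n_gt0).
have -> : window j = f @: setT.
  apply/setP => x; rewrite inE.
  apply/existsP/imsetP => [[d /eqP xd] | [d _ ->]].
    by exists d; rewrite ?inE //; apply: val_inj.
  by exists d.
rewrite card_imset ?cardsT ?card_ord // => d1 d2 /(congr1 val) /= /eqP.
rewrite eqn_modDl !modn_small; try exact: leq_trans (ltn_ord _) ltkn.
by move/eqP/val_inj.
Qed.

Hypothesis n_gt0 : 0 < n.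

Lemma window_succ_subset j :
  window j.+1 \subset Ordinal (ltn_pmod (j + k.+1) n_gt0) |: window j.
Proof.
apply/subsetP => x; rewrite !inE -val_eqE /= => /existsP[d /eqP ->].
have [ltdk | ledk] := ltnP d k.
  apply/orP; right; apply/existsP.
  by exists (Ordinal (ltdk : d.+1 < k.+1)); rewrite addSnnS.
have -> : nat_of_ord d = k by have := ltn_ord d; lia.
by rewrite addSnnS eqxx.
Qed.

Lemma window_subset_succ j :
  window j \subset Ordinal (ltn_pmod j n_gt0) |: window j.+1.
Proof.
apply/subsetP => x; rewrite !inE -val_eqE /= => /existsP[d /eqP ->].
have [-> | d_gt0] := posnP d; first by rewrite addn0 eqxx.
have lt_pd : d.-1 < k.+1 by have := ltn_ord d; lia.
apply/orP; right; apply/existsP.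
by exists (Ordinal lt_pd); rewrite /= addSnnS prednK.
Qed.

Lemma card_window_setI_step (A : {set 'I_n}) j :
  #|window j.+1 :&: A| <= #|window j :&: A|.+1 /\
  #|window j :&: A| <= #|window j.+1 :&: A|.+1.
Proof.
split; apply: leq_card_setI_subU1;
  [exact: window_succ_subset | exact: window_subset_succ].
Qed.

End Windows.

Section Boundary.

Variables (n k : nat) (A : {set 'I_n}).
Hypothesis ltkn : k < n.

Lemma window_boundary_bound j :
  #|window n k j :&: A| * (k.+1 - #|window n k j :&: A|)
    <= #|edge_boundary k A|.
Proof.
have := cardsID A (window n k j); rewrite card_window // => cardW.
have -> : k.+1 - #|window n k j :&: A| = #|window n k j :\: A| by lia.
rewrite -cardsX; apply: subset_leq_card; apply/subsetP => -[x y].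
rewrite !inE /= => /andP[/andP[Wx xA] /andP[yNA Wy]].
rewrite xA yNA; apply: (window_clique (j := j)); rewrite ?inE //.
by apply: contraNneq yNA => <-.
Qed.

Lemma card_boundary_ge c :
  (forall x, x \in A -> c <= #|window n k x :\: A|) ->
  #|A| * c <= #|edge_boundary k A|.
Proof.
move=> Wc; apply: leq_trans (_ : \sum_(x in A) c <= _).
  by rewrite sum_nat_const mulnC.
apply: leq_trans (leq_sum _ Wc) _.
rewrite -card_set_dep_pair; apply: subset_leq_card; apply/subsetP => -[x y].
rewrite !inE /= => /andP[xA /andP[yNA Wy]].
rewrite xA yNA; apply: (window_clique (j := x)); rewrite ?window_self ?inE //.
by apply: contraNneq yNA => <-.
Qed.

End Boundary.

Theorem mainTheorem20 (k n : nat) (A : {set 'I_n}) :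
  k <= #|A| -> #|A| <= n - k ->
  ((k%:R ^+ 2) / 4%:R - 1 <= (#|edge_boundary k A|)%:R :> rat)%R.
Proof.
move=> leA geA; set B := #|edge_boundary k A|.
suff leB : k ^ 2 <= 4 * B + 4.
  have : (k%:R ^+ 2 <= 4%:R * B%:R + 4%:R :> rat)%R.
    by rewrite -natrX -natrM -natrD ler_nat.
  by move=> ?; lra.
have [-> // | k_gt0] := posnP k.
have ltkn : k < n by lia.
have cardAC : #|~: A| = n - #|A| by rewrite cardsCs setCK card_ord.
pose a j := #|window n k j :&: A|.
set t := k.+1 %/ 2.
have a_step m : a m.+1 <= (a m).+1 /\ a m <= (a m.+1).+1.
  by apply: card_window_setI_step; lia.
have [[m am] | above | below] := nat_ivt_trichotomy t n a_step.
- by have := window_boundary_bound A ltkn m; rewrite -/(a m) am; nia.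
- suff : #|~: A| * t.+1 <= B by nia.
  rewrite /B -card_edge_boundaryC; apply: card_boundary_ge => x _.
  by rewrite setDE setCK; apply: above.
- suff : #|A| * (k.+2 - t) <= B by nia.
  apply: card_boundary_ge => x _.
  have := cardsID A (window n k x); rewrite card_window //.
  by have := below x (ltn_ord x); rewrite /a; lia.
Qed.
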